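(* Let $\alpha$ be a unit-speed curve in $\mathbb{R}^3$ with nonvanishing curvature, let $\alpha_T$ be its tangent indicatrix with arc length $s_T$ and Frenet apparatus $\{T_T,N_T,B_T,\kappa_T,\tau_T\}$, and let $\beta$ be an evolute-direction curve of $\alpha_T$ (an $X$-direction curve of $\alpha_T$ with $N_\beta=T_T$). Then there is an antiderivative $\varphi=\int\tau_T\,ds_T$ of $\tau_T$ with respect to $s_T$ such that $$\kappa_\beta=-\kappa_T\sin\varphi,\qquad \tau_\beta=\kappa_T\cos\varphi.$$ Moreover, $$\kappa_T=\sqrt{\kappa_\beta^2+\tau_\beta^2},\qquad \tau_T=\frac{\kappa_\beta^2}{\kappa_\beta^2+\tau_\beta^2}\,\frac{d}{ds_T}\Big(\frac{\tau_\beta}{\kappa_\beta}\Big).$$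
   Context: Let $\alpha:I\subset\mathbb{R}\to\mathbb{R}^3$ be a unit-speed curve with arc length $s$, curvature $\kappa>0$, torsion $\tau$ and Frenet frame $\{T,N,B\}$. The tangent indicatrix of $\alpha$ is the curve $\alpha_T=T$ on the unit sphere. Its arc length is $s_T=\int\kappa\,ds$. Its Frenet apparatus is $\{T_T,N_T,B_T,\kappa_T,\tau_T\}$, with $\frac{dT_T}{ds_T}=\kappa_TN_T$, $\frac{dN_T}{ds_T}=-\kappa_TT_T+\tau_TB_T$ and $\frac{dB_T}{ds_T}=-\tau_TN_T$. Let $x,y,z$ be real functions of $s_T$ with $x^2+y^2+z^2=1$, and set $X=xT_T+yN_T+zB_T$. An integral curve $\beta$ of $X$, meaning $d\beta/ds_T=X$, is an $X$-direction curve of $\alpha_T$. It has unit speed with arc length $s_T$. It is regarded as a Frenet curve with frame $\{T_\beta=X,N_\beta,B_\beta\}$, curvature $\kappa_\beta>0$ and torsion $\tau_\beta$, with derivatives taken with respect to $s_T$. $\beta$ is an evolute-direction curve of $\alpha_T$ if $N_\beta=T_T$. *)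

From HB Require Import structures.
From mathcomp Require Import all_boot all_order all_algebra.
From mathcomp Require Import all_classical all_reals all_analysis.
Set Implicit Arguments. Unset Strict Implicit. Unset Printing Implicit Defensive.
Import Order.TTheory GRing.Theory Num.Theory.
Import numFieldNormedType.Exports.
Local Open Scope classical_set_scope.
Local Open Scope ring_scope.

Definition dotv {R : realType} (u v : 'rV[R]_3) : R := \sum_(i < 3) u ord0 i * v ord0 i.

Definition crossv {R : realType} (u v : 'rV[R]_3) : 'rV[R]_3 :=
  let c := fun (w : 'rV[R]_3) (k : nat) => w ord0 (inord k) in
  \row_(i < 3) [:: c u 1%N * c v 2%N - c u 2%N * c v 1%N;
                   c u 2%N * c v 0%N - c u 0%N * c v 2%N;
                   c u 0%N * c v 1%N - c u 1%N * c v 0%N]`_i.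

(* [is_frenet I v c T N B k t]: on the set I, the curve c (parametrized by s)
   has positively oriented orthonormal Frenet frame {T,N,B}, curvature k > 0
   and torsion t, all *with respect to an arc length parameter sigma* with
   d sigma / ds = v s. *)
Definition is_frenet {R : realType} (I : set R) (v : R -> R)
  (c T N B : R -> 'rV[R]_3) (k t : R -> R) : Prop :=
  forall s, I s ->
  [/\ (derivable c s 1 /\ derive1 c s = v s *: T s),
      (derivable T s 1 /\ derive1 T s = (v s * k s) *: N s),
      (derivable N s 1 /\ derive1 N s = v s *: (- (k s) *: T s + t s *: B s)),
      (derivable B s 1 /\ derive1 B s = - (v s * t s) *: N s) /\
      [/\ dotv (T s) (T s) = 1, dotv (N s) (N s) = 1, dotv (T s) (N s) = 0
        & B s = crossv (T s) (N s)]
    & 0 < k s].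

From HB Require Import structures.
From mathcomp Require Import all_boot all_order all_algebra.
From mathcomp Require Import all_classical all_reals all_analysis.
From mathcomp Require Import ring lra.
Import Order.TTheory GRing.Theory Num.Theory.
Import numFieldNormedType.Exports.
Local Open Scope classical_set_scope.
Local Open Scope ring_scope.

(** Since N_beta = T_T, the Frenet equations of beta and of alpha_T give
    kT N_T = - kb X + tb (X x T_T): the unit vector X lies in the normal plane
    of alpha_T, with X = sin phi N_T + cos phi B_T for phi := - acos (X . B_T),
    and comparing coefficients yields kb = - kT sin phi, tb = kT cos phi.
    The Frenet equations of alpha_T make (X . N_T, X . B_T) rotate with angular
    speed k tT (in s), so phi' = k tT, and tb / kb = - cot phi then gives the
    torsion. *)

Section VectorAlgebra.
Variable R : realType.
Implicit Types (u v w : 'rV[R]_3) (a : R).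
Local Notation coord u k := (u ord0 (@inord 2 k)).

Lemma dotvE u v :
  dotv u v = coord u 0 * coord v 0 + coord u 1 * coord v 1 + coord u 2 * coord v 2.
Proof.
rewrite /dotv !big_ord_recl big_ord0 addr0 addrA.
by congr (_ * _ + _ * _ + _ * _); congr (_ _ _); apply/val_inj; rewrite /= inordK.
Qed.

Lemma crossvE u v :
  [/\ coord (crossv u v) 0 = coord u 1 * coord v 2 - coord u 2 * coord v 1,
      coord (crossv u v) 1 = coord u 2 * coord v 0 - coord u 0 * coord v 2 &
      coord (crossv u v) 2 = coord u 0 * coord v 1 - coord u 1 * coord v 0].
Proof. by rewrite /crossv !mxE !inordK. Qed.

Lemma dotvC u v : dotv u v = dotv v u.
Proof. by rewrite !dotvE; ring. Qed.

Lemma dotvZl a u v : dotv (a *: u) v = a * dotv u v.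
Proof. by rewrite !dotvE !mxE; ring. Qed.

Lemma dotvZr a u v : dotv u (a *: v) = a * dotv u v.
Proof. by rewrite dotvC dotvZl dotvC. Qed.

Lemma dotvDl u v w : dotv (u + v) w = dotv u w + dotv v w.
Proof. by rewrite !dotvE !mxE; ring. Qed.

Lemma dotvDr u v w : dotv u (v + w) = dotv u v + dotv u w.
Proof. by rewrite dotvC dotvDl !(dotvC u). Qed.

Lemma dotv_crossl u v : dotv u (crossv u v) = 0.
Proof. by rewrite dotvE; have [-> -> ->] := crossvE u v; ring. Qed.

Lemma dotv_cross_cycle u v w : dotv u (crossv v w) = dotv v (crossv w u).
Proof.
by rewrite !dotvE; have [-> -> ->] := crossvE v w; have [-> -> ->] := crossvE w u; ring.
Qed.

Lemma dotv_crossvv u v :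
  dotv (crossv u v) (crossv u v) = dotv u u * dotv v v - dotv u v ^+ 2.
Proof. by rewrite !dotvE; have [-> -> ->] := crossvE u v; ring. Qed.

End VectorAlgebra.

Lemma is_derive_mx_entry (R : realFieldType) (V : normedModType R) (m n : nat)
    (M : V -> 'M[R]_(m, n)) (t v : V) (i : 'I_m) (j : 'I_n) :
  derivable M t v -> is_derive t v (fun x => M x i j) ('D_v M t i j).
Proof.
move=> dM; have dMij := (derivable_mxP M t v).1 dM i j.
by apply: DeriveDef => //; rewrite derive_mx // mxE.
Qed.

Lemma is_derive_dotv (R : realType) (u v : R -> 'rV[R]_3) (s : R) :
  derivable u s 1 -> derivable v s 1 ->
  is_derive s 1 (fun r => dotv (u r) (v r))
    (dotv ('D_1 u s) (v s) + dotv (u s) ('D_1 v s)).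
Proof.
move=> du dv.
have -> : (fun r => dotv (u r) (v r)) = \sum_(i < 3) (fun r => u r ord0 i * v r ord0 i).
  by rewrite fct_sumE.
apply: is_derive_eq.
  by apply: is_derive_sum => i; apply: is_deriveM; apply: is_derive_mx_entry.
rewrite /dotv -big_split; apply: eq_bigr => i _ /=.
by rewrite /GRing.scale /=; ring.
Qed.

Section RotatingUnitVector.
Context {R : realType}.

Lemma unit_circle_open_bound {a b : R} :
  a != 0 -> a ^+ 2 + b ^+ 2 = 1 -> -1 < b < 1.
Proof.
move=> a_neq0 ab1; have a2_gt0 : 0 < a ^+ 2 by rewrite exprn_even_gt0.
by apply/andP; split; nra.
Qed.

Lemma sqrt_one_sub_sqr {a b : R} : a < 0 -> a ^+ 2 + b ^+ 2 = 1 ->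
  Num.sqrt (1 - b ^+ 2) = - a.
Proof.
by move=> a_lt0 <-; rewrite addrK sqrtr_sqr ltr0_norm.
Qed.

Lemma sin_Nacos {a b : R} : a < 0 -> a ^+ 2 + b ^+ 2 = 1 -> sin (- acos b) = a.
Proof.
move=> a_lt0 ab1; have /andP[b_gtN1 b_lt1] := unit_circle_open_bound (ltr0_neq0 a_lt0) ab1.
by rewrite sinN sin_acos ?ltW ?b_gtN1 // (sqrt_one_sub_sqr a_lt0 ab1) opprK.
Qed.

Lemma cos_Nacos {a b : R} : a ^+ 2 + b ^+ 2 = 1 -> cos (- acos b) = b.
Proof.
move=> ab1; have a2_ge0 : 0 <= a ^+ 2 by rewrite sqr_ge0.
by rewrite cosN acosK // in_itv /=; apply/andP; split; nra.
Qed.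

Lemma is_derive_Nacos {a w : R} {b : R -> R} {s : R} :
  a < 0 -> a ^+ 2 + b s ^+ 2 = 1 -> is_derive s 1 b (- (w * a)) ->
  is_derive s 1 (fun r => - acos (b r)) w.
Proof.
move=> a_lt0 ab1 db.
have bI := unit_circle_open_bound (ltr0_neq0 a_lt0) ab1.
apply: is_derive_eq (is_deriveN (is_derive1_comp (is_derive1_acos bI) db)) _.
rewrite (sqrt_one_sub_sqr a_lt0 ab1).
by field; rewrite ltr0_neq0.
Qed.

(* With (a, b) = (sin phi, cos phi) and phi' = w, this is (- cot phi)' = w / sin^2 phi. *)
Lemma is_derive_rotating_cot {a b : R -> R} {w s : R} :
  a s != 0 -> a s ^+ 2 + b s ^+ 2 = 1 ->
  is_derive s 1 a (w * b s) -> is_derive s 1 b (- (w * a s)) ->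
  is_derive s 1 (fun r => - (b r / a r)) (w / a s ^+ 2).
Proof.
move=> a_neq0 ab1 da db.
apply: is_derive_eq (is_deriveN (is_deriveM db (is_deriveV a_neq0 da))) _.
by rewrite /GRing.scale /= -[w in RHS]mulr1 -ab1; field.
Qed.

End RotatingUnitVector.

Lemma coords_in_orthonormal_pair {R : realType} {X TT NT : 'rV[R]_3} {kT p q : R} :
  dotv X X = 1 -> dotv TT TT = 1 -> dotv X TT = 0 -> dotv NT NT = 1 ->
  kT *: NT = p *: X + q *: crossv X TT ->
  [/\ kT * dotv X NT = p, kT * dotv X (crossv TT NT) = q
    & kT ^+ 2 = p ^+ 2 + q ^+ 2].
Proof.
move=> X1 TT1 XTT0 NT1 NTE.
have XBX0 : dotv X (crossv X TT) = 0 by rewrite dotv_crossl.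
have BX1 : dotv (crossv X TT) (crossv X TT) = 1.
  by rewrite dotv_crossvv X1 TT1 XTT0; ring.
split.
- by rewrite -dotvZr NTE dotvDr !dotvZr X1 XBX0; ring.
- rewrite 2!dotv_cross_cycle -dotvZl NTE dotvDl !dotvZl XBX0 BX1; ring.
- have <- : dotv (kT *: NT) (kT *: NT) = kT ^+ 2 by rewrite dotvZl dotvZr NT1; ring.
  rewrite NTE !dotvDl !dotvDr !dotvZl !dotvZr X1 BX1 XBX0 dotvC XBX0; ring.
Qed.

Section EvoluteDirection.
Context {R : realType} {I : set R} {k : R -> R}.
Context {T TT NT BT : R -> 'rV[R]_3} {kT tT : R -> R}.
Context {beta X Nb Bb : R -> 'rV[R]_3} {kb tb : R -> R}.
Hypotheses (I_open : open I) (k_gt0 : forall s, I s -> 0 < k s).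
Hypotheses (frenet_T : is_frenet I k T TT NT BT kT tT)
  (frenet_beta : is_frenet I k beta X Nb Bb kb tb)
  (NbE : forall s, I s -> Nb s = TT s).

Lemma evolute_normal s : I s ->
  kT s *: NT s = - kb s *: X s + tb s *: crossv (X s) (TT s).
Proof.
move=> Is; have [_ [_ dTTE] _ _ _] := frenet_T s Is.
have [_ _ [_ dNbE] [_ [_ _ _ BbE]] _] := frenet_beta s Is.
have dNb_dTT : derive1 Nb s = derive1 TT s.
  rewrite !derive1E; apply: near_eq_derive.
  exact: filterS (open_nbhs_nbhs (conj I_open Is)).
apply: (@scalerI _ _ (k s)); first by rewrite gt_eqF ?k_gt0.
by rewrite scalerA -dTTE -dNb_dTT dNbE -NbE // -BbE.
Qed.

Lemma evolute_coords s : I s ->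
  [/\ kT s * dotv (X s) (NT s) = - kb s, kT s * dotv (X s) (BT s) = tb s
    & kT s ^+ 2 = kb s ^+ 2 + tb s ^+ 2].
Proof.
move=> Is; have [_ _ _ [_ [TT1 NT1 _ ->]] _] := frenet_T s Is.
have [_ _ _ [_ [X1 _ XNb0 _]] _] := frenet_beta s Is.
have XTT0 : dotv (X s) (TT s) = 0 by rewrite -NbE.
have [-> -> ->] := coords_in_orthonormal_pair X1 TT1 XTT0 NT1 (evolute_normal s Is).
by rewrite sqrrN.
Qed.

Lemma dotv_X_NT_lt0 s : I s -> dotv (X s) (NT s) < 0.
Proof.
move=> Is; have [_ _ _ _ kT_gt0] := frenet_T s Is.
have [_ _ _ _ kb_gt0] := frenet_beta s Is.
have [XNT _ _] := evolute_coords s Is.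
by rewrite -(pmulr_rlt0 _ kT_gt0) XNT oppr_lt0.
Qed.

Lemma dotv_X_normal_plane s : I s ->
  dotv (X s) (NT s) ^+ 2 + dotv (X s) (BT s) ^+ 2 = 1.
Proof.
move=> Is; have [_ _ _ _ kT_gt0] := frenet_T s Is.
have [XNT XBT kT2] := evolute_coords s Is.
apply: (@mulfI _ (kT s ^+ 2)); first by rewrite gt_eqF // exprn_gt0.
by rewrite mulr1 {2}kT2 -[kb s ^+ 2]sqrrN -XNT -XBT; ring.
Qed.

Lemma is_derive_dotv_X_NT s : I s ->
  is_derive s 1 (fun r => dotv (X r) (NT r)) (k s * tT s * dotv (X s) (BT s)).
Proof.
move=> Is; have [_ _ [dNT dNTE] [_ [_ _ TTNT0 _]] _] := frenet_T s Is.
have [_ [dX dXE] _ [_ [_ _ XNb0 _]] _] := frenet_beta s Is.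
apply: is_derive_eq; first exact: is_derive_dotv.
rewrite -!derive1E dXE dNTE NbE // dotvZl TTNT0 dotvZr dotvDr !dotvZr -NbE // XNb0.
ring.
Qed.

Lemma is_derive_dotv_X_BT s : I s ->
  is_derive s 1 (fun r => dotv (X r) (BT r)) (- (k s * tT s * dotv (X s) (NT s))).
Proof.
move=> Is; have [_ _ _ [[dBT dBTE] [_ _ _ BTE]] _] := frenet_T s Is.
have [_ [dX dXE] _ _ _] := frenet_beta s Is.
apply: is_derive_eq; first exact: is_derive_dotv.
rewrite -!derive1E dXE dBTE NbE // dotvZl BTE dotv_crossl dotvZr; ring.
Qed.

Lemma evolute_torsion_ratio s : I s ->
  tb s / kb s = - (dotv (X s) (BT s) / dotv (X s) (NT s)).
Proof.
move=> Is; have [_ _ _ _ kT_gt0] := frenet_T s Is.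
have [XNT XBT _] := evolute_coords s Is.
rewrite -XBT -[kb s]opprK -XNT; field.
by rewrite ltr0_neq0 ?dotv_X_NT_lt0 // gt_eqF.
Qed.

Lemma is_derive_evolute_torsion_ratio s : I s ->
  is_derive s 1 (fun r => tb r / kb r) (k s * tT s / dotv (X s) (NT s) ^+ 2).
Proof.
move=> Is.
apply: (near_eq_is_derive (f := fun r => - (dotv (X r) (BT r) / dotv (X r) (NT r)))).
  apply: filterS (open_nbhs_nbhs (conj I_open Is)) => r Ir.
  by rewrite evolute_torsion_ratio.
apply: is_derive_rotating_cot.
- by rewrite ltr0_neq0 ?dotv_X_NT_lt0.
- exact: dotv_X_normal_plane.
- exact: is_derive_dotv_X_NT.
- exact: is_derive_dotv_X_BT.
Qed.

Lemma is_derive_evolute_angle s : I s ->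
  is_derive s 1 (fun r => - acos (dotv (X r) (BT r))) (k s * tT s).
Proof.
move=> Is; apply: (is_derive_Nacos (dotv_X_NT_lt0 s Is) (dotv_X_normal_plane s Is)).
exact: is_derive_dotv_X_BT.
Qed.

Lemma evolute_curvatures s : I s ->
  kb s = - kT s * sin (- acos (dotv (X s) (BT s))) /\
  tb s = kT s * cos (- acos (dotv (X s) (BT s))).
Proof.
move=> Is; have [XNT XBT _] := evolute_coords s Is.
rewrite (sin_Nacos (dotv_X_NT_lt0 s Is) (dotv_X_normal_plane s Is)).
by rewrite (cos_Nacos (dotv_X_normal_plane s Is)) mulNr XNT opprK XBT.
Qed.

Lemma evolute_curvature_norm s : I s -> kT s = Num.sqrt (kb s ^+ 2 + tb s ^+ 2).
Proof.
move=> Is; have [_ _ _ _ kT_gt0] := frenet_T s Is.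
have [_ _ <-] := evolute_coords s Is.
by rewrite sqrtr_sqr gtr0_norm.
Qed.

Lemma evolute_torsion s : I s ->
  tT s = kb s ^+ 2 / (kb s ^+ 2 + tb s ^+ 2) * ('D_1 (fun r => tb r / kb r) s / k s).
Proof.
move=> Is; have [_ _ _ _ kT_gt0] := frenet_T s Is.
have [XNT _ kT2] := evolute_coords s Is.
have [_ ->] := is_derive_evolute_torsion_ratio s Is.
rewrite -kT2 -sqrrN -XNT; field.
by rewrite (gt_eqF (k_gt0 s Is)) (ltr0_neq0 (dotv_X_NT_lt0 s Is)) (gt_eqF kT_gt0).
Qed.

End EvoluteDirection.

Theorem theorem4p3 (R : realType) (I : set R)
  (alpha T N B : R -> 'rV[R]_3) (k t : R -> R)
  (TT NT BT : R -> 'rV[R]_3) (kT tT : R -> R)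
  (x y z : R -> R) (X beta Nb Bb : R -> 'rV[R]_3) (kb tb : R -> R) :
  open I -> is_interval I ->
  is_frenet I (fun _ => 1) alpha T N B k t ->
  is_frenet I k T TT NT BT kT tT ->
  (forall s, I s -> x s ^+ 2 + y s ^+ 2 + z s ^+ 2 = 1) ->
  (forall s, I s -> X s = x s *: TT s + y s *: NT s + z s *: BT s) ->
  is_frenet I k beta X Nb Bb kb tb ->
  (forall s, I s -> Nb s = TT s) ->
  exists phi : R -> R,
    (forall s, I s -> derivable phi s 1 /\ derive1 phi s = k s * tT s) /\
    (forall s, I s -> kb s = - kT s * sin (phi s) /\ tb s = kT s * cos (phi s)) /\
    (forall s, I s ->
       kT s = Num.sqrt (kb s ^+ 2 + tb s ^+ 2) /\
       derivable (fun u => tb u / kb u) s 1 /\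
       tT s = kb s ^+ 2 / (kb s ^+ 2 + tb s ^+ 2) *
              (derive1 (fun u => tb u / kb u) s / k s)).
Proof.
move=> I_open _ frenet_alpha frenet_T _ _ frenet_beta NbE.
have k_gt0 s : I s -> 0 < k s by case/frenet_alpha.
exists (fun r => - acos (dotv (X r) (BT r))); split; [|split] => s Is.
- have [dphi Dphi] := is_derive_evolute_angle I_open k_gt0 frenet_T frenet_beta NbE s Is.
  by rewrite derive1E Dphi.
- exact: (evolute_curvatures I_open k_gt0 frenet_T frenet_beta NbE).
- have [dratio _] := is_derive_evolute_torsion_ratio I_open k_gt0 frenet_T frenet_beta NbE s Is.
  split; first exact: (evolute_curvature_norm I_open k_gt0 frenet_T frenet_beta NbE).
  by rewrite derive1E; split => //; apply: (evolute_torsion I_open k_gt0 frenet_T frenet_beta NbE).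
Qed.
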